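(* For every $\bar\tau\in(0,1)$ there exist $\bar\rho,\bar R,\bar\phi,\bar\epsilon>0$ such that the following holds. Let $p,q\in\mathbb{H}^n\setminus\{0\}$, $t,\tilde t\ge1$, $R>1$, $\epsilon>0$, and $r\ge\tilde r\ge t\tilde tR$ with $\tilde r\le\epsilon r$, and suppose $q\in\partial_tB_r(p)$ and $0\in\partial_tB_r(p)\cap\partial_{\tilde t}B_{\tilde r}(q)$. If $R>\bar R$, $\epsilon<\bar\epsilon$, $|\tau_p|\le\bar\tau$ and $\max_{1\le i\le n}\phi_i(p,q)<\bar\phi$, then $d(\hat p,\hat q)>\bar\rho$.
   Context: $\mathbb{H}^n=\mathbb{C}^n\times\mathbb{R}$ with product $(z,\tau)(w,\sigma)=(z+w,\tau+\sigma+\tfrac12\operatorname{Im}\langle z,w\rangle)$, $\langle z,w\rangle=\sum_j\overline{z_j}w_j$, identity $0$; dilations $\delta_\lambda(z,\tau)=(\lambda z,\lambda^2\tau)$; $d(p,q)=\inf\{r>0:\delta_{1/r}(pq^{-1})\in B_{eucl}\}$ ($B_{eucl}$ the closed Euclidean unit ball in $\mathbb{R}^{2n+1}$), so the unit sphere of $d$ about $0$ is the Euclidean unit sphere. $B_r(p)=\{y:d(y,p)\le r\}$, $\partial B_r(p)=\{y:d(y,p)=r\}$, $\partial_tB_r(p)=\{y:d(y,\partial B_r(p))\le t\}$. For $p\ne0$ let $\hat p=\delta_{1/d(p,0)}p=(z_p,\tau_p)$, so $\|z_p\|^2+\tau_p^2=1$; write $(z_p)_j=\rho_j(p)e^{i\phi_j(p)}$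 with $\rho_j(p)\ge0$, $\phi_j(p)\in(-\pi,\pi]$. For $p,q\ne0$, $\phi_j(p,q)\in[0,\pi]$ is the magnitude of the angle between $e^{i\phi_j(p)}$ and $e^{i\phi_j(q)}$. *)

From Stdlib Require Import Reals ClassicalEpsilon.
From mathcomp Require Import ssreflect ssrfun ssrbool eqtype ssrnat fintype bigop.
Set Implicit Arguments.
Open Scope R_scope.

(* Points of H^n = C^n x R : z_j = hx j + i hy j, and tau = ht. *)
Record Hpt (n : nat) := mkH { hx : 'I_n -> R; hy : 'I_n -> R; ht : R }.

Definition Hzero (n : nat) : Hpt n := mkH (fun _ => 0) (fun _ => 0) 0.

Definition Rsum (n : nat) (f : 'I_n -> R) : R := \big[Rplus/0]_(i < n) f i.

(* Im <z,w> with <z,w> = sum conj(z_j) w_j *)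
Definition ImH (n : nat) (p q : Hpt n) : R :=
  Rsum (fun j => hx p j * hy q j - hy p j * hx q j).

Definition Hmul (n : nat) (p q : Hpt n) : Hpt n :=
  mkH (fun j => hx p j + hx q j) (fun j => hy p j + hy q j)
      (ht p + ht q + / 2 * ImH p q).

Definition Hinv (n : nat) (p : Hpt n) : Hpt n :=
  mkH (fun j => - hx p j) (fun j => - hy p j) (- ht p).

Definition dil (n : nat) (l : R) (p : Hpt n) : Hpt n :=
  mkH (fun j => l * hx p j) (fun j => l * hy p j) (l ^ 2 * ht p).

Definition eucl2 (n : nat) (p : Hpt n) : R :=
  Rsum (fun j => hx p j ^ 2 + hy p j ^ 2) + ht p ^ 2.

(* infimum of a set of reals (0 if it has no greatest lower bound) *)
Definition is_glb (E : R -> Prop) (m : R) : Prop :=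
  (forall x, E x -> m <= x) /\ (forall b, (forall x, E x -> b <= x) -> b <= m).

Definition Rinf (E : R -> Prop) : R :=
  match excluded_middle_informative (exists m, is_glb E m) with
  | left H => proj1_sig (constructive_indefinite_description _ H)
  | right _ => 0
  end.

Definition dH (n : nat) (p q : Hpt n) : R :=
  Rinf (fun r => 0 < r /\ eucl2 (dil (/ r) (Hmul p (Hinv q))) <= 1).

Definition sphere (n : nat) (r : R) (p : Hpt n) : Hpt n -> Prop :=
  fun y => dH y p = r.

Definition dset (n : nat) (y : Hpt n) (S : Hpt n -> Prop) : R :=
  Rinf (fun s => exists x, S x /\ s = dH y x).

(* the condition "y in d_t B_r(p)", i.e. d(y, dB_r(p)) <= t; requires dB_r(p) nonempty
   (d(y, emptyset) = +infinity) *)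
Definition thick_sphere (n : nat) (t r : R) (p : Hpt n) (y : Hpt n) : Prop :=
  (exists x, sphere r p x) /\ dset y (sphere r p) <= t.

Definition hat (n : nat) (p : Hpt n) : Hpt n := dil (/ dH p (Hzero n)) p.

(* unit complex number e^{i phi_j(p)} = z_j / |z_j| (convention: 1 if z_j = 0),
   where z_j is the j-th coordinate of hat p *)
Definition unit_re (n : nat) (p : Hpt n) (j : 'I_n) : R :=
  let a := hx (hat p) j in let b := hy (hat p) j in
  if Req_EM_T (sqrt (a ^ 2 + b ^ 2)) 0 then 1 else a / sqrt (a ^ 2 + b ^ 2).
Definition unit_im (n : nat) (p : Hpt n) (j : 'I_n) : R :=
  let a := hx (hat p) j in let b := hy (hat p) j in
  if Req_EM_T (sqrt (a ^ 2 + b ^ 2)) 0 then 0 else b / sqrt (a ^ 2 + b ^ 2).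

(* phi_j(p,q) in [0,pi]: magnitude of the angle between e^{i phi_j(p)} and e^{i phi_j(q)} *)
Definition phi_ang (n : nat) (j : 'I_n) (p q : Hpt n) : R :=
  acos (unit_re p j * unit_re q j + unit_im p j * unit_im q j).

From Stdlib Require Import Reals Lra Psatz Classical ClassicalEpsilon.
From mathcomp Require Import ssreflect ssrbool fintype bigop.
Open Scope R_scope.

(* The distance is d(x, y) = N(x y^-1) for the gauge N determined by
   N^4 = |z|^2 N^2 + tau^2; hence |z| <= N, |tau| <= N^2, and N satisfies the
   quasi-triangle inequality N(x y)^2 <= 2 (N x + N y)^2.  The thick-sphere
   hypotheses give points x0 ~ 0 and x1 ~ q on the sphere of radius r about p,
   and a point ~ 0 on the sphere of radius r~ about q, so N(p) ~ r and
   N(q) ~ r~ << r.  Subtracting the sphere equations of x0 and x1 isolates the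
   term 2 r^2 N(p) Re<z_hat(p), z(x1) - z(x0)>.  If d(hat p, hat q) is small then
   z(x1) - z(x0) ~ N(q) z_hat(q) ~ N(q) z_hat(p), and |tau(hat p)| <= taub forces
   |z_hat(p)|^2 >= 1 - taub^2, so that term is of order (1 - taub^2) r^3 N(q) and
   outweighs everything else. *)

Lemma is_glb_unique (E : R -> Prop) (m m' : R) : is_glb E m -> is_glb E m' -> m = m'.
Proof.
by move=> [lb_m glb_m] [lb_m' glb_m']; have := glb_m _ lb_m'; have := glb_m' _ lb_m; lra.
Qed.

Lemma Rinf_eq {E : R -> Prop} {m : R} : is_glb E m -> Rinf E = m.
Proof.
move=> glb_m; rewrite /Rinf; case: excluded_middle_informative => [ex_glb|[]]; last by exists m.
by case: constructive_indefinite_description => m' /= glb_m'; apply: is_glb_unique glb_m' glb_m.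
Qed.

Lemma is_glb_equiv (E F : R -> Prop) (m : R) :
  (forall r, E r <-> F r) -> is_glb F m -> is_glb E m.
Proof.
move=> EF [lb_m glb_m]; split=> [r /EF|b lb_b]; first exact: lb_m.
by apply: glb_m => r /EF; apply: lb_b.
Qed.

Lemma is_glb_ray (m : R) : 0 <= m -> is_glb (fun r => 0 < r /\ m <= r) m.
Proof.
move=> m_ge0; split=> [r [] //|b lb_b]; apply: Rnot_lt_le => lt_mb.
by have := lb_b ((m + b) / 2); lra.
Qed.

Lemma nonneg_glb_exists (E : R -> Prop) :
  (exists r, E r) -> (forall r, E r -> 0 <= r) -> exists m, is_glb E m.
Proof.
move=> [r0 E_r0] E_ge0.
have bounded : bound (fun s => E (- s)) by exists 0 => s /E_ge0; lra.
have inhabited : exists s, E (- s) by exists (- r0); rewrite Ropp_involutive.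
have [m [ub_m lub_m]] := completeness _ bounded inhabited.
exists (- m); split=> [r E_r|b lb_b].
- by have := ub_m (- r); rewrite Ropp_involutive => /(_ E_r); lra.
- by have := lub_m (- b) (fun s E_s => ltac:(have := lb_b _ E_s; lra)); lra.
Qed.

Lemma Rinf_lt_ex (E : R -> Prop) (b : R) :
  (exists m, is_glb E m) -> Rinf E < b -> exists r, E r /\ r < b.
Proof.
move=> [m glb_m]; rewrite (Rinf_eq glb_m) => lt_mb.
apply: NNPP => no_r; have [_ /(_ b) le_bm] := glb_m; apply: (Rlt_not_le _ _ lt_mb).
by apply: le_bm => r E_r; apply: Rnot_lt_le => lt_rb; apply: no_r; exists r.
Qed.

Section Heisenberg.
Context {n : nat}.
Implicit Types (x y u w : Hpt n) (f g : 'I_n -> R).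

Lemma Rsum_lin (a b : R) f g :
  Rsum (fun j => a * f j + b * g j) = a * Rsum f + b * Rsum g.
Proof. by apply: (big_rec3 (fun s sf sg => s = a * sf + b * sg)) => [|j s sf sg _ ->]; ring. Qed.

Definition zdot x y := Rsum (fun j => hx x j * hx y j + hy x j * hy y j).
Definition znorm x := sqrt (zdot x x).

(* (z, tau) |-> (-i z, tau), so that Im <z_x, z_y> = Re <z_x, -i z_y>. *)
Definition Hrot x := mkH (fun j => hy x j) (fun j => - hx x j) (ht x).

Lemma zdotC x y : zdot x y = zdot y x.
Proof. by apply: eq_bigr => j _; ring. Qed.

Lemma zdot_lin (a b : R) u x y w :
  (forall j, hx u j = a * hx x j + b * hx y j) ->
  (forall j, hy u j = a * hy x j + b * hy y j) ->
  zdot u w = a * zdot x w + b * zdot y w.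
Proof. by move=> ux uy; rewrite -Rsum_lin; apply: eq_bigr => j _; rewrite ux uy; ring. Qed.

Lemma zdot_ext u x w :
  (forall j, hx u j = hx x j) -> (forall j, hy u j = hy x j) -> zdot u w = zdot x w.
Proof. by move=> ux uy; rewrite (@zdot_lin 1 0 u x x) => [|j|j]; rewrite ?ux ?uy; ring. Qed.

Lemma zdotMl x y w : zdot (Hmul x y) w = zdot x w + zdot y w.
Proof. by rewrite (@zdot_lin 1 1 _ x y) => [|j|j] /=; ring. Qed.

Lemma zdotVl x w : zdot (Hinv x) w = - zdot x w.
Proof. by rewrite (@zdot_lin (-1) 0 _ x x) => [|j|j] /=; ring. Qed.

Lemma zdotZl (c : R) x w : zdot (dil c x) w = c * zdot x w.
Proof. by rewrite (@zdot_lin c 0 _ x x) => [|j|j] /=; ring. Qed.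

Lemma zdot0l w : zdot (Hzero n) w = 0.
Proof. by rewrite (@zdot_lin 0 0 _ w w) => [|j|j] /=; ring. Qed.

Lemma zdotMr w x y : zdot w (Hmul x y) = zdot w x + zdot w y.
Proof. by rewrite !(zdotC w) zdotMl. Qed.

Lemma zdotVr w x : zdot w (Hinv x) = - zdot w x.
Proof. by rewrite !(zdotC w) zdotVl. Qed.

Lemma zdotZr (c : R) w x : zdot w (dil c x) = c * zdot w x.
Proof. by rewrite !(zdotC w) zdotZl. Qed.

Lemma zdot0r w : zdot w (Hzero n) = 0.
Proof. by rewrite zdotC zdot0l. Qed.

Lemma zdot_rot x y : zdot (Hrot x) (Hrot y) = zdot x y.
Proof. by apply: eq_bigr => j _ /=; ring. Qed.

Lemma zdot_self_ge0 x : 0 <= zdot x x.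
Proof. by apply: (big_ind (fun s => 0 <= s)) => [|*|j _]; [lra | lra | nra]. Qed.

Lemma zdot_CS x y : zdot x y ^ 2 <= zdot x x * zdot y y.
Proof.
have quad (a b : R) : 0 <= a ^ 2 * zdot x x - 2 * a * b * zdot x y + b ^ 2 * zdot y y.
  have := zdot_self_ge0 (Hmul (dil a x) (Hinv (dil b y))).
  by rewrite !(zdotMl, zdotMr, zdotVl, zdotVr, zdotZl, zdotZr) (zdotC y x); lra.
have := zdot_self_ge0 x; have := zdot_self_ge0 y.
case: (Req_dec (zdot y y) 0) => [yy0|yy0] yy_ge0 xx_ge0.
- by have := quad (zdot x y) (zdot x x + 1); rewrite yy0; nra.
- by have := quad (zdot y y) (zdot x y); nra.
Qed.

Lemma ImH_rot x y : ImH x y = zdot x (Hrot y).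
Proof. by apply: eq_bigr => j _ /=; ring. Qed.

Lemma ImHC x y : ImH x y = - ImH y x.
Proof. by apply: (big_rec2 (fun s s' => s = - s')) => [|j s s' _ ->]; ring. Qed.

Lemma ImH_self x : ImH x x = 0.
Proof. by have := ImHC x x; lra. Qed.

Lemma ImHMl x y w : ImH (Hmul x y) w = ImH x w + ImH y w.
Proof. by rewrite !ImH_rot zdotMl. Qed.

Lemma ImHVl x w : ImH (Hinv x) w = - ImH x w.
Proof. by rewrite !ImH_rot zdotVl. Qed.

Lemma ImHZl (c : R) x w : ImH (dil c x) w = c * ImH x w.
Proof. by rewrite !ImH_rot zdotZl. Qed.

Lemma ImH0l w : ImH (Hzero n) w = 0.
Proof. by rewrite ImH_rot zdot0l. Qed.

Lemma ImHMr w x y : ImH w (Hmul x y) = ImH w x + ImH w y.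
Proof. by rewrite !(ImHC w) ImHMl; ring. Qed.

Lemma ImHVr w x : ImH w (Hinv x) = - ImH w x.
Proof. by rewrite !(ImHC w) ImHVl. Qed.

Lemma ImHZr (c : R) w x : ImH w (dil c x) = c * ImH w x.
Proof. by rewrite !(ImHC w) ImHZl; ring. Qed.

Lemma ImH0r w : ImH w (Hzero n) = 0.
Proof. by rewrite ImHC ImH0l Ropp_0. Qed.

Definition expand_bilin :=
  (zdotMl, zdotMr, zdotVl, zdotVr, zdotZl, zdotZr, zdot0l, zdot0r,
   ImHMl, ImHMr, ImHVl, ImHVr, ImHZl, ImHZr, ImH0l, ImH0r).

Lemma znorm_ge0 x : 0 <= znorm x.
Proof. exact: sqrt_pos. Qed.

Lemma znorm_sq x : znorm x ^ 2 = zdot x x.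
Proof. by rewrite /znorm pow2_sqrt //; apply: zdot_self_ge0. Qed.

Lemma znorm_ext u x :
  (forall j, hx u j = hx x j) -> (forall j, hy u j = hy x j) -> znorm u = znorm x.
Proof. by move=> ux uy; rewrite /znorm (zdot_ext u x u ux uy) zdotC (zdot_ext u x x ux uy). Qed.

Lemma zdot_le_norm x y : Rabs (zdot x y) <= znorm x * znorm y.
Proof.
rewrite /znorm -sqrt_mult; try exact: zdot_self_ge0.
by rewrite -sqrt_Rsqr_abs; apply: sqrt_le_1_alt; rewrite /Rsqr; have := zdot_CS x y; lra.
Qed.

Lemma ImH_le_norm x y : Rabs (ImH x y) <= znorm x * znorm y.
Proof.
have rot_y : znorm (Hrot y) = znorm y by rewrite /znorm zdot_rot.
by rewrite ImH_rot -rot_y; apply: zdot_le_norm.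
Qed.

Lemma znormV x : znorm (Hinv x) = znorm x.
Proof. by rewrite /znorm zdotVl zdotVr Ropp_involutive. Qed.

Lemma znormZ (c : R) x : znorm (dil c x) = Rabs c * znorm x.
Proof.
rewrite /znorm zdotZl zdotZr -Rmult_assoc sqrt_mult; last exact: zdot_self_ge0.
  by rewrite -sqrt_Rsqr_abs.
exact: Rle_0_sqr.
Qed.

Lemma znormM x y : znorm (Hmul x y) <= znorm x + znorm y.
Proof.
have := zdot_le_norm x y; have := znorm_ge0 x; have := znorm_ge0 y.
have := znorm_sq (Hmul x y); have := znorm_sq x; have := znorm_sq y.
rewrite zdotMl !zdotMr (zdotC y x) => ey ex exy.
by have := znorm_ge0 (Hmul x y); rewrite /Rabs; case: Rcase_abs; nra.
Qed.

(* d(x, 0) is the r > 0 with |z|^2 r^2 + tau^2 = r^4 (the dilate of x by 1/r lies on the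
   Euclidean unit sphere); [gauge] is its closed form. *)
Definition gauge x := sqrt ((zdot x x + sqrt (zdot x x ^ 2 + 4 * ht x ^ 2)) / 2).

Lemma gauge_ge0 x : 0 <= gauge x.
Proof. exact: sqrt_pos. Qed.

Lemma gauge_ext x y : zdot x x = zdot y y -> ht x ^ 2 = ht y ^ 2 -> gauge x = gauge y.
Proof. by rewrite /gauge => -> ->. Qed.

Lemma gauge_disc x :
  let s := sqrt (zdot x x ^ 2 + 4 * ht x ^ 2) in
  s ^ 2 = zdot x x ^ 2 + 4 * ht x ^ 2 /\ zdot x x <= s /\ s <= zdot x x + 2 * Rabs (ht x).
Proof.
move=> s; have a_ge0 := zdot_self_ge0 x; have t_ge0 := Rabs_pos (ht x).
have s_ge0 : 0 <= s by apply: sqrt_pos.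
have s_sq : s ^ 2 = zdot x x ^ 2 + 4 * ht x ^ 2.
  by rewrite /s pow2_sqrt //; have := pow2_ge_0 (zdot x x); have := pow2_ge_0 (ht x); lra.
move: s_sq s_ge0; rewrite -(pow2_abs (ht x)); clearbody s => s_sq s_ge0.
by split; [|split]; nra.
Qed.

Lemma gauge_sq x : gauge x ^ 2 = (zdot x x + sqrt (zdot x x ^ 2 + 4 * ht x ^ 2)) / 2.
Proof.
by rewrite /gauge pow2_sqrt //; have [_ []] := gauge_disc x; have := zdot_self_ge0 x; lra.
Qed.

(* The second root [(|z|^2 - sqrt (|z|^4 + 4 tau^2)) / 2] is [<= 0]. *)
Lemma gauge_factor x (u : R) :
  u ^ 2 - zdot x x * u - ht x ^ 2 =
  (u - gauge x ^ 2) * (u - (zdot x x - sqrt (zdot x x ^ 2 + 4 * ht x ^ 2)) / 2).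
Proof.
have [s_sq _] := gauge_disc x; rewrite gauge_sq.
move: s_sq; set s := sqrt _ => s_sq.
have -> : ht x ^ 2 = (s ^ 2 - zdot x x ^ 2) / 4 by lra.
field.
Qed.

Lemma gauge_quartic x : gauge x ^ 4 = zdot x x * gauge x ^ 2 + ht x ^ 2.
Proof.
have := gauge_factor x (gauge x ^ 2).
have -> : gauge x ^ 4 = (gauge x ^ 2) ^ 2 by ring.
lra.
Qed.

Lemma gauge_le_iff x (r : R) :
  0 < r -> zdot x x * r ^ 2 + ht x ^ 2 <= r ^ 4 <-> gauge x <= r.
Proof.
move=> r_gt0; have := gauge_factor x (r ^ 2); have [_ [le_as _]] := gauge_disc x.
have := gauge_ge0 x; have -> : (r ^ 2) ^ 2 = r ^ 4 by ring.
set s := sqrt _ in le_as *; set N := gauge x => N_ge0 factor.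
have r2_gt0 : 0 < r ^ 2 by nra.
have root2_lt : (zdot x x - s) / 2 < r ^ 2 by lra.
split=> [le_r4|le_Nr].
- apply: Rnot_lt_le => lt_rN; have : r ^ 2 < N ^ 2 by nra.
  nra.
- have : N ^ 2 <= r ^ 2 by nra.
  nra.
Qed.

Lemma zdot_le_gauge2 x : zdot x x <= gauge x ^ 2.
Proof. by rewrite gauge_sq; have [_ []] := gauge_disc x; lra. Qed.

Lemma gauge2_le x : gauge x ^ 2 <= zdot x x + Rabs (ht x).
Proof. by rewrite gauge_sq; have [_ []] := gauge_disc x; lra. Qed.

Lemma znorm_le_gauge x : znorm x <= gauge x.
Proof.
rewrite /znorm -(sqrt_pow2 (gauge x) (gauge_ge0 x)).
exact/sqrt_le_1_alt/zdot_le_gauge2.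
Qed.

Lemma ht_le_gauge2 x : Rabs (ht x) <= gauge x ^ 2.
Proof.
have := gauge_quartic x; have := zdot_le_gauge2 x; have := Rabs_pos (ht x).
by have := zdot_self_ge0 x; rewrite -(pow2_abs (ht x)); nra.
Qed.

Lemma gaugeV x : gauge (Hinv x) = gauge x.
Proof. by apply: gauge_ext; rewrite /= ?expand_bilin; ring. Qed.

Lemma gaugeM_le x y : gauge (Hmul x y) ^ 2 <= 2 * (gauge x + gauge y) ^ 2.
Proof.
have Nx_ge0 := gauge_ge0 x; have Ny_ge0 := gauge_ge0 y.
have zx := znorm_le_gauge x; have zy := znorm_le_gauge y.
have zx_ge0 := znorm_ge0 x; have zy_ge0 := znorm_ge0 y.
have z_xy : zdot (Hmul x y) (Hmul x y) <= (gauge x + gauge y) ^ 2.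
  rewrite -znorm_sq; apply: pow_incr; have := znormM x y; have := znorm_ge0 (Hmul x y); lra.
have t_xy : Rabs (ht (Hmul x y)) <= gauge x ^ 2 + gauge y ^ 2 + / 2 * (gauge x * gauge y).
  have := ImH_le_norm x y; have := ht_le_gauge2 x; have := ht_le_gauge2 y.
  have := Rabs_triang (ht x + ht y) (/ 2 * ImH x y); have := Rabs_triang (ht x) (ht y).
  rewrite /= Rabs_mult (Rabs_right (/ 2)); last lra.
  have : znorm x * znorm y <= gauge x * gauge y by apply: Rmult_le_compat.
  lra.
by have := gauge2_le (Hmul x y); nra.
Qed.

Lemma eucl2_zdot x : eucl2 x = zdot x x + ht x ^ 2.
Proof. by congr (_ + _); apply: eq_bigr => j _; ring. Qed.

Lemma eucl2_dil_le1 x (r : R) :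
  0 < r -> eucl2 (dil (/ r) x) <= 1 <-> zdot x x * r ^ 2 + ht x ^ 2 <= r ^ 4.
Proof.
move=> r_gt0; have r4_gt0 : 0 < r ^ 4 by apply: pow_lt.
have <- : eucl2 (dil (/ r) x) * r ^ 4 = zdot x x * r ^ 2 + ht x ^ 2.
  by rewrite eucl2_zdot zdotZl zdotZr /=; field; lra.
by split; nra.
Qed.

Lemma dH_gauge x y : dH x y = gauge (Hmul x (Hinv y)).
Proof.
apply/Rinf_eq/is_glb_equiv/is_glb_ray/gauge_ge0 => r.
by split=> -[r_gt0 le_r]; split=> //; move: le_r; rewrite eucl2_dil_le1 // gauge_le_iff.
Qed.

Lemma dHC x y : dH x y = dH y x.
Proof. by rewrite !dH_gauge; apply: gauge_ext; rewrite /= !expand_bilin ?(ImHC y x); ring. Qed.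

Lemma dH0r x : dH x (Hzero n) = gauge x.
Proof. by rewrite dH_gauge; apply: gauge_ext; rewrite /= ?expand_bilin; ring. Qed.

Lemma dH0l x : dH (Hzero n) x = gauge x.
Proof. by rewrite dHC dH0r. Qed.

Lemma znorm_le_dH x y : znorm (Hmul x (Hinv y)) <= dH x y.
Proof. by rewrite dH_gauge; apply: znorm_le_gauge. Qed.

Lemma gauge_le_dH x y : gauge x ^ 2 <= 2 * (dH x y + gauge y) ^ 2.
Proof.
have -> : gauge x = gauge (Hmul (Hmul x (Hinv y)) y).
  by apply: gauge_ext; rewrite /= !expand_bilin ?ImH_self ?(ImHC y x); ring.
by rewrite dH_gauge; apply: gaugeM_le.
Qed.

Lemma dH_le_gauge x y : dH x y ^ 2 <= 2 * (gauge x + gauge y) ^ 2.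
Proof. by rewrite dH_gauge -(gaugeV y); apply: gaugeM_le. Qed.

Lemma gauge_center_bounds {x y : Hpt n} {r : R} (s : R) :
  dH x y = r -> gauge x <= s -> 5 * s <= r -> r / 2 <= gauge y <= 4 * r.
Proof.
move=> xy_r x_le s_le; have x_ge0 := gauge_ge0 x; have y_ge0 := gauge_ge0 y.
have := dH_le_gauge x y; have := gauge_le_dH y x; rewrite dHC xy_r => upper lower.
by split; nra.
Qed.

Lemma thick_sphere_near {t r : R} {p y : Hpt n} :
  thick_sphere t r p y -> exists x, dH x p = r /\ dH y x < t + 1.
Proof.
move=> [[x0 on0] near].
have [s [[x [on_x ->]] lt_s]] :
    exists s, (exists x, sphere r p x /\ s = dH y x) /\ s < t + 1.
  apply: Rinf_lt_ex; last by rewrite /dset in near; lra.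
  apply: nonneg_glb_exists; first by exists (dH y x0), x0.
  by move=> _ [x [_ ->]]; rewrite dH_gauge; apply: gauge_ge0.
by exists x.
Qed.

Lemma sphere_pair_identity {x0 x1 p : Hpt n} {r : R} : dH x0 p = r -> dH x1 p = r ->
  let D := Hmul x1 (Hinv x0) in
  let V := ht x1 - ht x0 - / 2 * ImH D p in
  r ^ 2 * (2 * zdot x0 D - 2 * zdot p D + zdot D D) +
  V * (2 * ht (Hmul x0 (Hinv p)) + V) = 0.
Proof.
rewrite !dH_gauge => on0 on1 D V.
have := gauge_quartic (Hmul x0 (Hinv p)); have := gauge_quartic (Hmul x1 (Hinv p)).
rewrite on0 on1.
have -> : ht (Hmul x1 (Hinv p)) = ht (Hmul x0 (Hinv p)) + V.
  by rewrite /V /D /= !expand_bilin; ring.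
have -> : zdot (Hmul x1 (Hinv p)) (Hmul x1 (Hinv p)) =
          zdot (Hmul x0 (Hinv p)) (Hmul x0 (Hinv p)) + (2 * zdot x0 D - 2 * zdot p D + zdot D D).
  by rewrite /D !expand_bilin (zdotC x1 x0) (zdotC p x0) (zdotC p x1); ring.
nra.
Qed.

Section Hat.
Context {x : Hpt n}.
Hypothesis x_pos : 0 < gauge x.

Lemma zdot_hat w : zdot x w = gauge x * zdot (hat x) w.
Proof. by rewrite -zdotZl; apply: zdot_ext => j /=; rewrite dH0r; field; lra. Qed.

Lemma ImH_hat w : ImH w x = gauge x * ImH w (hat x).
Proof. by rewrite ImHC ImH_rot zdot_hat -ImH_rot (ImHC w); ring. Qed.

Lemma hat_unit : zdot (hat x) (hat x) + ht (hat x) ^ 2 = 1.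
Proof.
have tau2 : ht x ^ 2 = gauge x ^ 4 - zdot x x * gauge x ^ 2 by have := gauge_quartic x; lra.
rewrite /hat dH0r zdotZl zdotZr.
have -> : ht (dil (/ gauge x) x) ^ 2 = ht x ^ 2 / gauge x ^ 4 by rewrite /=; field; lra.
by rewrite tau2; field; lra.
Qed.

Lemma zdot_hat_ge {b : R} : Rabs (ht (hat x)) <= b -> 1 - b ^ 2 <= zdot (hat x) (hat x).
Proof.
move=> le_b; have := pow_incr _ _ 2 (conj (Rabs_pos _) le_b).
by rewrite pow2_abs; have := hat_unit; lra.
Qed.

Lemma znorm_hat_le1 : znorm (hat x) <= 1.
Proof.
rewrite /znorm -sqrt_1; apply: sqrt_le_1_alt.
by have := hat_unit; have := pow2_ge_0 (ht (hat x)); lra.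
Qed.

End Hat.

End Heisenberg.

(* The difference of the sphere equations of x0 and x1 (see [sphere_pair_identity]) in terms
   of X = Re <z(x0), D>, G = Re <z(hat p), D>, H = Im <D, z(hat p)>, Dn = |D|,
   T0 = tau(x0 p^-1) and Dt = tau(x1) - tau(x0), where D = z(x1) - z(x0); the term
   2 r^2 Np G ~ c r^3 Nq dominates. *)
Lemma sphere_difference_neq0 {c r t Np Nq E G H X Dn T0 Dt : R} :
  0 < c <= 1 -> 0 < Nq -> 0 <= t -> 500 * t <= c * Nq -> 1000 * Nq <= c * r ->
  r / 2 <= Np <= 4 * r -> 0 <= E <= c * Nq / 10 -> c * Nq - E <= G -> Rabs H <= E ->
  0 <= Dn <= Nq + E -> Rabs X <= 2 * t * Dn -> Rabs T0 <= r ^ 2 -> Rabs Dt <= 3 * Nq ^ 2 ->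
  let V := Dt - Np / 2 * H in
  2 * r ^ 2 * (X - Np * G) + r ^ 2 * Dn ^ 2 + V * (2 * T0 + V) <> 0.
Proof.
move=> [c_gt0 c_le1] Nq_gt0 t_ge0 t_small Nq_small [Np_lo Np_hi] [E_ge0 E_small] G_lo H_le
  [Dn_ge0 Dn_le] X_le T0_le Dt_le V.
have r_gt0 : 0 < r by nra.
have r2_gt0 : 0 < r ^ 2 by nra.
have Nq_le : Nq <= r / 1000 by nra.
have Nq2_le : Nq ^ 2 <= Nq * (c * r / 1000) by nra.
have t_le : t <= Nq / 500 by nra.
have V_le : Rabs V <= c * r * Nq / 4.
  have : Rabs (Np / 2 * H) <= 2 * r * E.
    rewrite Rabs_mult Rabs_right; last lra.
    by apply: Rmult_le_compat; [lra | exact: Rabs_pos | lra | lra].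
  have : 2 * r * E <= 2 * r * (c * Nq / 10) by apply: Rmult_le_compat_l; lra.
  have : 0 <= c * r * Nq by apply: Rmult_le_pos; nra.
  by have := Rabs_triang Dt (- (Np / 2 * H)); rewrite Rabs_Ropp /V /Rminus; lra.
have VT_le : Rabs (V * (2 * T0 + V)) <= c * r * Nq / 4 * (3 * r ^ 2).
  rewrite Rabs_mult; apply: Rmult_le_compat; try exact: Rabs_pos; first lra.
  have : c * r * Nq <= r ^ 2 / 1000 by nra.
  by have := Rabs_triang (2 * T0) V; rewrite Rabs_mult (Rabs_right 2); lra.
have X_le' : Rabs (2 * r ^ 2 * X) <= r ^ 2 * (Nq ^ 2 / 50).
  rewrite Rabs_mult (Rabs_right (2 * r ^ 2)); last lra.
  have tDn : t * Dn <= Nq / 500 * (2 * Nq) by apply: Rmult_le_compat; nra.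
  have X2 : 2 * Rabs X <= Nq ^ 2 / 50 by have := pow2_ge_0 Nq; lra.
  by have := Rmult_le_compat_l _ _ _ (Rlt_le _ _ r2_gt0) X2; lra.
have Dn2_le : Dn ^ 2 <= 2 * Nq ^ 2.
  have Dn_le' : Dn <= 11 / 10 * Nq by nra.
  by have := pow_incr Dn (11 / 10 * Nq) 2 (conj Dn_ge0 Dn_le'); nra.
have G_Np : r / 2 * (9 / 10 * c * Nq) <= Np * G by apply: Rmult_le_compat; nra.
have r2_le := Rmult_le_compat_l _ _ _ (Rlt_le _ _ r2_gt0).
have := r2_le _ _ G_Np; have := r2_le _ _ Dn2_le; have := r2_le _ _ Nq2_le.
have := Rle_abs (2 * r ^ 2 * X); have := Rle_abs (V * (2 * T0 + V)).
have : 0 < c * r ^ 3 * Nq by apply: Rmult_lt_0_compat; [apply: Rmult_lt_0_compat|]; nra.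
lra.
Qed.

Section RadialPair.
Context {n : nat} (p q x0 x1 : Hpt n) (r t c : R).
Local Notation Np := (gauge p).
Local Notation Nq := (gauge q).
Local Notation e := (hat p).
Local Notation D := (Hmul x1 (Hinv x0)).
Local Notation W := (Hmul D (Hinv (dil Nq e))).

Hypothesis c_range : 0 < c <= 1.
Hypothesis e_horizontal : c <= zdot e e.
Hypothesis x0_on_sphere : dH x0 p = r.
Hypothesis x1_on_sphere : dH x1 p = r.
Hypothesis x0_near_origin : gauge x0 <= 2 * t.
Hypothesis x1_near_q : dH x1 q <= 2 * t.
Hypothesis q_pos : 0 < Nq.
Hypothesis t_small : 500 * t <= c * Nq.
Hypothesis q_small : 1000 * Nq <= c * r.
Hypothesis p_size : r / 2 <= Np <= 4 * r.
Hypothesis hats_close : dH e (hat q) <= c / 20.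

Let t_ge0 : 0 <= t. Proof. by have := gauge_ge0 x0; lra. Qed.
Let r_pos : 0 < r. Proof. by case: c_range => c_gt0 _; nra. Qed.
Let p_pos : 0 < Np. Proof. by case: p_size; lra. Qed.
Let e_le1 : znorm e <= 1. Proof. exact: znorm_hat_le1. Qed.

(* [z(W) = (z(x1) - z(q)) - z(x0) + Nq (z(hat q) - z(hat p))]. *)
Lemma defect_le : znorm W <= c * Nq / 10.
Proof.
have -> : znorm W =
    znorm (Hmul (Hmul (Hmul x1 (Hinv q)) (Hinv x0)) (dil (- Nq) (Hmul e (Hinv (hat q))))).
  by apply: znorm_ext => j /=; rewrite !dH0r; field; lra.
have := znorm_le_dH x1 q; have := znorm_le_gauge x0; have := znorm_le_dH e (hat q).
have := znorm_ge0 (Hmul e (Hinv (hat q))).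
have := znormM (Hmul (Hmul x1 (Hinv q)) (Hinv x0)) (dil (- Nq) (Hmul e (Hinv (hat q)))).
have := znormM (Hmul x1 (Hinv q)) (Hinv x0).
rewrite znormZ znormV Rabs_Ropp Rabs_right; last lra.
nra.
Qed.

Lemma radial_component_ge : c * Nq - znorm W <= zdot e D.
Proof.
have -> : zdot e D = Nq * zdot e e + zdot e W by rewrite !expand_bilin; ring.
have := zdot_le_norm e W; have := znorm_ge0 W.
have : c * Nq <= Nq * zdot e e by nra.
by rewrite /Rabs; case: Rcase_abs; nra.
Qed.

Lemma transversal_component_le : Rabs (ImH D e) <= znorm W.
Proof.
have -> : ImH D e = ImH W e by rewrite (ImHMl D) ImHVl ImHZl ImH_self; ring.
by have := ImH_le_norm W e; have := znorm_ge0 W; nra.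
Qed.

Lemma displacement_le : znorm D <= Nq + znorm W.
Proof.
have -> : znorm D = znorm (Hmul W (dil Nq e)) by apply: znorm_ext => j /=; ring.
have := znormM W (dil Nq e); rewrite znormZ Rabs_right; last lra.
by have := znorm_ge0 e; nra.
Qed.

Lemma zdot_displacement_le : Rabs (zdot x0 D) <= 2 * t * znorm D.
Proof. by have := zdot_le_norm x0 D; have := znorm_le_gauge x0; have := znorm_ge0 D; nra. Qed.

Lemma ht_sphere_le : Rabs (ht (Hmul x0 (Hinv p))) <= r ^ 2.
Proof. by have := ht_le_gauge2 (Hmul x0 (Hinv p)); rewrite -dH_gauge x0_on_sphere. Qed.

Lemma ht_displacement_le : Rabs (ht x1 - ht x0) <= 3 * Nq ^ 2.
Proof.
have t_le : t <= Nq / 500 by case: c_range => *; nra.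
have dH_ge0 : 0 <= dH x1 q by rewrite dH_gauge; apply: gauge_ge0.
have x1_le : gauge x1 ^ 2 <= 2 * (2 * t + Nq) ^ 2.
  have := gauge_le_dH x1 q; have : (dH x1 q + Nq) ^ 2 <= (2 * t + Nq) ^ 2.
    by apply: pow_incr; lra.
  lra.
have x0_le : gauge x0 ^ 2 <= (2 * t) ^ 2 by apply: pow_incr; have := gauge_ge0 x0; lra.
have := ht_le_gauge2 x1; have := ht_le_gauge2 x0.
have := Rabs_triang (ht x1) (- ht x0); rewrite Rabs_Ropp /Rminus.
have : t * t <= t * (Nq / 500) by apply: Rmult_le_compat_l.
have : t * Nq <= Nq / 500 * Nq by apply: Rmult_le_compat_r; lra.
nra.
Qed.

Lemma radial_pair_absurd : False.
Proof.
have identity := sphere_pair_identity x0_on_sphere x1_on_sphere; cbv zeta in identity.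
rewrite (zdot_hat p_pos) (ImH_hat p_pos) -znorm_sq in identity.
have := sphere_difference_neq0 c_range q_pos t_ge0 t_small q_small p_size
  (conj (znorm_ge0 W) defect_le) radial_component_ge transversal_component_le
  (conj (znorm_ge0 D) displacement_le) zdot_displacement_le ht_sphere_le ht_displacement_le.
by apply; rewrite -identity; field.
Qed.

End RadialPair.

Lemma scale_separation {c t tt Rr eps r rt : R} :
  0 < c <= 1 -> 1 <= t -> 1 <= tt -> t * tt * Rr <= rt -> rt <= r -> rt <= eps * r ->
  1000 / c < Rr -> eps < c / 4000 ->
  [/\ 0 < rt, 1000 * t <= c * rt, 1000 * tt <= c * rt & 4000 * rt <= c * r].
Proof.
move=> [c_gt0 c_le1] t_ge1 tt_ge1 ttR_le rt_le_r rt_le Rr_gt eps_lt.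
have cRr : 1000 < c * Rr.
  by have := Rmult_lt_compat_l c _ _ c_gt0 Rr_gt; rewrite /Rdiv -Rmult_assoc Rinv_r_simpl_m; lra.
have c_ttR : c * (t * tt * Rr) <= c * rt by apply: Rmult_le_compat_l; lra.
have ttR : 1000 * (t * tt) <= c * Rr * (t * tt) by apply: Rmult_le_compat_r; nra.
have t_le : t <= t * tt by nra.
have tt_le : tt <= t * tt by nra.
have Rr_gt0 : 0 < Rr by nra.
have rt_gt0 : 0 < rt.
  have : 1 * Rr <= t * tt * Rr by apply: Rmult_le_compat_r; nra.
  lra.
split=> //; try lra.
have r_ge0 : 0 <= r by lra.
by have := Rmult_le_compat_r r _ _ r_ge0 (Rlt_le _ _ eps_lt); lra.
Qed.

Theorem lemma12 (n : nat) (taub : R) :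
  0 < taub < 1 ->
  exists rhob Rb phib epsb : R,
    0 < rhob /\ 0 < Rb /\ 0 < phib /\ 0 < epsb /\
    forall (p q : Hpt n) (t tt Rr eps r rt : R),
      p <> Hzero n -> q <> Hzero n ->
      1 <= t -> 1 <= tt -> 1 < Rr -> 0 < eps ->
      t * tt * Rr <= rt -> rt <= r -> rt <= eps * r ->
      thick_sphere t r p q ->
      thick_sphere t r p (Hzero n) ->
      thick_sphere tt rt q (Hzero n) ->
      Rb < Rr -> eps < epsb ->
      Rabs (ht (hat p)) <= taub ->
      (forall i : 'I_n, phi_ang i p q < phib) ->
      dH (hat p) (hat q) > rhob.
Proof.
move=> [taub_gt0 taub_lt1]; set c := 1 - taub ^ 2.
have c_range : 0 < c <= 1 by rewrite /c; nra.
exists (c / 20), (1000 / c), 1, (c / 4000).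
split; [|split; [|split; [|split]]]; try (apply: Rdiv_lt_0_compat; lra); try lra.
move=> p q t tt Rr eps r rt _ _ t_ge1 tt_ge1 _ _ ttR_le rt_le_r rt_le on_pq on_p0 on_q0 Rr_gt eps_lt
  tau_le _.
apply: Rnot_le_gt => hats_close.
have [rt_gt0 t_small tt_small rt_small] :=
  scale_separation c_range t_ge1 tt_ge1 ttR_le rt_le_r rt_le Rr_gt eps_lt.
have [x1 [x1_on x1_near]] := thick_sphere_near on_pq.
have [x0 [x0_on x0_near]] := thick_sphere_near on_p0.
have [x2 [x2_on x2_near]] := thick_sphere_near on_q0.
rewrite dH0l in x0_near; rewrite dH0l in x2_near; rewrite dHC in x1_near.
have crt_le : c * rt <= rt by case: c_range => *; nra.
have [q_lo q_hi] := gauge_center_bounds (2 * tt) x2_on ltac:(lra) ltac:(lra).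
have [p_lo p_hi] := gauge_center_bounds (2 * t) x0_on ltac:(lra) ltac:(lra).
have e_horizontal := zdot_hat_ge (x := p) ltac:(lra) tau_le.
apply: (radial_pair_absurd p q x0 x1 r t c c_range e_horizontal x0_on x1_on) => //; try lra.
have : c * (rt / 2) <= c * gauge q by apply: Rmult_le_compat_l; lra.
lra.
Qed.
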